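(* Let $$N=\begin{pmatrix}2&1&0&0&1&2\\1&2&2&1&0&0\\0&0&1&2&2&1\end{pmatrix},\qquad M=\begin{pmatrix}3&3&2&1&1&2\\2&1&1&2&3&3\end{pmatrix},$$ and let $\phi:K[x_1,\dots,x_6]\to K[t_1,t_2,t_3]$, $x_i\mapsto \mathbf t^{\mathbf b_i}$ ($\mathbf b_i$ the columns of $N$). Then $I_N\subseteq I_M$, and $\mathrm{rad}((\phi(I_M))^e)=\mathrm{rad}(\phi(x_3^3-x_1x_2),\phi(x_4^3-x_5x_6))$, but $I_M\neq \mathrm{rad}(I_N+(x_3^3-x_1x_2,\;x_4^3-x_5x_6))$ (no power of $x_6^2-x_3x_4x_5\in I_M$ lies in $I_N+(x_3^3-x_1x_2,x_4^3-x_5x_6)$). In particular, the hypothesis $\Gamma(N)=V(I_N)$ cannot be dropped from Theorem 3.1 (and indeed $\Gamma(N)\ne V(I_N)$ here).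
   Context: $K$ is a field. For an integer matrix $M$ with columns $\mathbf a_i$, the toric ideal $I_M\subseteq K[x_1,\dots,x_n]$ is the kernel of $x_i\mapsto\mathbf t^{\mathbf a_i}$ into a Laurent polynomial ring. $(\phi(I_M))^e$ is the ideal of $K[t_1,t_2,t_3]$ generated by $\phi(I_M)$. $\Gamma(N)=\{(\mathbf T^{\mathbf b_1},\dots,\mathbf T^{\mathbf b_n}):\mathbf T\in\bar K^3\}$ and $V(I_N)$ is the zero set of $I_N$ in $\bar K^6$. Theorem 3.1 states: if $N$ has non-negative entries, $I_N\subseteq I_M$ and $\Gamma(N)=V(I_N)$, then for $f_1,\dots,f_s\in I_M$, $I_M=\mathrm{rad}(I_N+(f_1,\dots,f_s))$ iff $\mathrm{rad}((\phi(I_M))^e)=\mathrm{rad}(\phi(f_1),\dots,\phi(f_s))$. *)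

From HB Require Import structures.
From mathcomp Require Import all_boot all_algebra.
From mathcomp Require Import mpoly.
Set Implicit Arguments. Unset Strict Implicit. Unset Printing Implicit Defensive.
Import GRing.Theory.
Local Open Scope ring_scope.

Definition ideal_gen (K : fieldType) (n : nat) (S : {mpoly K[n]} -> Prop)
  : {mpoly K[n]} -> Prop :=
  fun p => exists s : seq ({mpoly K[n]} * {mpoly K[n]}),
    (forall c, c \in s -> S c.2) /\ p = \sum_(c <- s) c.1 * c.2.

Definition mrad (K : fieldType) (n : nat) (I : {mpoly K[n]} -> Prop)
  : {mpoly K[n]} -> Prop :=
  fun p => exists k : nat, I (p ^+ k).

Definition set_eq (T : Type) (A B : T -> Prop) := forall x, A x <-> B x.
Definition incl_set (T : Type) (A B : T -> Prop) := forall x, A x -> B x.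

Definition col_monomial (K : fieldType) (d n : nat) (A : 'M[nat]_(d, n))
  (i : 'I_n) : {mpoly K[d]} :=
  'X_[ [multinom A j i | j < d] ].

Definition monomial_map (K : fieldType) (d n : nat) (A : 'M[nat]_(d, n))
  (p : {mpoly K[n]}) : {mpoly K[d]} :=
  p \mPo [tuple @col_monomial K d n A i | i < n].

(* Toric ideal I_A: kernel of the monomial map.  Since A has non-negative
   entries, the image lies in the polynomial ring K[t], which embeds in the
   Laurent ring, so the kernel is the same. *)
Definition toric_ideal (K : fieldType) (d n : nat) (A : 'M[nat]_(d, n))
  : {mpoly K[n]} -> Prop :=
  fun p => @monomial_map K d n A p = 0.

Definition image_set (T U : Type) (f : T -> U) (S : T -> Prop) : U -> Prop :=
  fun u => exists t, S t /\ u = f t.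

Definition Gamma (L : fieldType) (d n : nat) (A : 'M[nat]_(d, n))
  : ('I_n -> L) -> Prop :=
  fun x => exists T : 'I_d -> L, forall i : 'I_n, x i = \prod_(j < d) T j ^+ A j i.

Definition zero_set (K L : fieldType) (iota : {rmorphism K -> L}) (n : nat)
  (I : {mpoly K[n]} -> Prop) : ('I_n -> L) -> Prop :=
  fun x => forall p, I p -> (map_mpoly iota p).@[x] = 0.

Definition mat_of_lists (d n : nat) (l : seq (seq nat)) : 'M[nat]_(d, n) :=
  \matrix_(i < d, j < n) nth 0%N (nth [::] l i) j.

Definition Nmat : 'M[nat]_(3, 6) :=
  mat_of_lists 3 6 [:: [:: 2; 1; 0; 0; 1; 2];
                       [:: 1; 2; 2; 1; 0; 0];
                       [:: 0; 0; 1; 2; 2; 1] ]%N.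

Definition Mmat : 'M[nat]_(2, 6) :=
  mat_of_lists 2 6 [:: [:: 3; 3; 2; 1; 1; 2];
                       [:: 2; 1; 1; 2; 3; 3] ]%N.

(* x_k (1-based, k = 1..6) in K[x_1..x_6]. *)
Definition xv (K : fieldType) (k : nat) : {mpoly K[6]} := 'X_(@inord 5 k.-1).

Definition f1 (K : fieldType) : {mpoly K[6]} := xv K 3 ^+ 3 - xv K 1 * xv K 2.
Definition f2 (K : fieldType) : {mpoly K[6]} := xv K 4 ^+ 3 - xv K 5 * xv K 6.
Definition g6 (K : fieldType) : {mpoly K[6]} := xv K 6 ^+ 2 - xv K 3 * xv K 4 * xv K 5.

(* Since M = P N with P = [[1,1,0],[1,0,1]], the monomial map of M factors
   through that of N, whence I_N <= I_M.  Put h = (T1 T2)^3 - T0^3.  Modulo the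
   ideal h (T1, T2), every monomial in the image of phi_N is congruent to a
   normal monomial depending only on its P-degree, i.e. on the M-degree of its
   preimage; an element of I_M has cancelling coefficients in each M-degree, so
   phi_N (I_M) <= h (T1, T2).  Since phi_N (f1) = T1^3 h and phi_N (f2) = T2^3 h,
   the two radicals agree.  The point e6 = (0,...,0,1) kills I_N (evaluation
   at e6 factors through phi_N), f1 and f2, but not g6, so no power of g6 lies
   in I_N + (f1, f2).  Finally e6 is in V(I_N) but not in Gamma(N): x5 = T0 T2^2
   and x6 = T0^2 T2 cannot be 0 and 1. *)

From HB Require Import structures.
From mathcomp Require Import all_boot all_algebra.
From mathcomp Require Import mpoly ssrcomplements zify ring bigenough.
Import BigEnough.
Import GRing.Theory.
Set Implicit Arguments. Unset Strict Implicit. Unset Printing Implicit Defensive.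
Local Open Scope ring_scope.

Section MonomialLinearExtension.
Variables (R : nzRingType) (n : nat) (V : lmodType R) (F : 'X_{1..n} -> V).

Definition mlin (p : {mpoly R[n]}) : V := \sum_(m <- msupp p) p@_m *: F m.

Lemma mlinwE p w : (msize p <= w)%N ->
  mlin p = \sum_(m : 'X_{1..n < w}) p@_m *: F m.
Proof.
move=> le_pw; set I : subFinType _ := 'X_{1..n < w}.
rewrite /mlin (big_mksub I) ?msupp_uniq //=; first last.
  by move=> x /msize_mdeg_lt /leq_trans; apply.
by rewrite big_rmcond //= => m /memN_msupp_eq0 ->; rewrite scale0r.
Qed.

Lemma mlin_is_linear : linear mlin.
Proof.
move=> c p q; pose_big_enough w.
  rewrite !(@mlinwE _ w) // scaler_sumr -big_split; apply: eq_bigr => m _.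
  by rewrite mcoeffD mcoeffZ scalerDl scalerA.
by close.
Qed.

HB.instance Definition _ :=
  GRing.isLinear.Build R {mpoly R[n]} V _ mlin mlin_is_linear.

Lemma mlinX m : mlin 'X_[m] = F m.
Proof. by rewrite /mlin msuppX big_seq1 mcoeffX eqxx scale1r. Qed.

End MonomialLinearExtension.

Definition mnm_mx (d n : nat) (A : 'M[nat]_(d, n)) (u : 'X_{1..n}) : 'X_{1..d} :=
  [multinom (\sum_(i < n) A j i * u i)%N | j < d].

Lemma mnm_mxM (e d n : nat) (P : 'M[nat]_(e, d)) (A : 'M[nat]_(d, n)) u :
  mnm_mx (P *m A) u = mnm_mx P (mnm_mx A u).
Proof.
apply/mnmP => k; rewrite !mnmE.
under eq_bigr => i _ do rewrite mxE big_distrl /=.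
rewrite exchange_big /=; apply: eq_bigr => j _.
by rewrite mnmE big_distrr /=; apply: eq_bigr => i _; rewrite mulnA.
Qed.

Section MonomialMap.
Variables (K : fieldType) (d n : nat) (A : 'M[nat]_(d, n)).
Local Notation phi := (@monomial_map K d n A).

HB.instance Definition _ :=
  GRing.LRMorphism.copy phi (comp_mpoly [tuple @col_monomial K d n A i | i < n]).

Lemma monomial_mapX u : phi 'X_[u] = 'X_[mnm_mx A u].
Proof.
rewrite /monomial_map comp_mpolyX [RHS]mpolyXE_id.
under eq_bigr => i _ do rewrite tnth_mktuple /col_monomial mpolyXE_id -prodrXl.
under eq_bigr => i _ do under eq_bigr => j _ do rewrite mnmE -exprM.
by rewrite exchange_big /=; apply: eq_bigr => j _; rewrite prodrXr mnmE.
Qed.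

Lemma monomial_mapE p :
  phi p = \sum_(u <- msupp p) p@_u *: 'X_[mnm_mx A u].
Proof.
by rewrite {1}/monomial_map comp_mpolyEX; apply: eq_bigr => u _; rewrite -monomial_mapX.
Qed.

Lemma mlin_monomial_map (V : lmodType K) (F : 'X_{1..d} -> V) p :
  mlin F (phi p) = \sum_(u <- msupp p) p@_u *: F (mnm_mx A u).
Proof.
by rewrite monomial_mapE linear_sum; apply: eq_bigr => u _; rewrite linearZ /= mlinX.
Qed.

Lemma toric_ideal_mlin (V : lmodType K) (F : 'X_{1..d} -> V) p :
  @toric_ideal K d n A p -> \sum_(u <- msupp p) p@_u *: F (mnm_mx A u) = 0.
Proof. by rewrite /toric_ideal -mlin_monomial_map => ->; rewrite linear0. Qed.

Lemma meval_toric_ideal (x : 'I_n -> K) (G : 'X_{1..d} -> K) p :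
  (forall u : 'X_{1..n}, \prod_(i < n) x i ^+ u i = G (mnm_mx A u)) ->
  @toric_ideal K d n A p -> p.@[x] = 0.
Proof.
move=> xG /(toric_ideal_mlin (V := K^o) G) <-.
by rewrite mevalE; apply: eq_bigr => u _; rewrite xG.
Qed.

End MonomialMap.

Lemma monomial_map_mulmx (K : fieldType) e d n
    (P : 'M[nat]_(e, d)) (A : 'M[nat]_(d, n)) (p : {mpoly K[n]}) :
  monomial_map (P *m A) p = monomial_map P (monomial_map A p).
Proof.
rewrite monomial_mapE (monomial_mapE A) linear_sum; apply: eq_bigr => u _.
by rewrite linearZ /= monomial_mapX mnm_mxM.
Qed.

Lemma toric_ideal_mulmx (K : fieldType) e d n
    (P : 'M[nat]_(e, d)) (A : 'M[nat]_(d, n)) :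
  incl_set (@toric_ideal K d n A) (@toric_ideal K e n (P *m A)).
Proof.
by move=> p; rewrite /toric_ideal monomial_map_mulmx => ->; rewrite raddf0.
Qed.

Lemma meval_map_mpoly (K L : fieldType) (iota : {rmorphism K -> L}) n
    (v : 'I_n -> K) (p : {mpoly K[n]}) :
  (map_mpoly iota p).@[fun i => iota (v i)] = iota p.@[v].
Proof.
rewrite !mevalE (perm_big _ (msupp_map_mpoly _ (fmorph_inj iota))) rmorph_sum.
apply: eq_bigr => m _; rewrite mcoeff_map_mpoly rmorphM rmorph_prod.
by congr (_ * _); apply: eq_bigr => i _; rewrite rmorphXn.
Qed.

Section IdealGen.
Variables (K : fieldType) (n : nat).
Implicit Types (S I : {mpoly K[n]} -> Prop).

Lemma ideal_gen_min S I :
  I 0 -> (forall x y, I x -> I y -> I (x + y)) -> (forall a x, I x -> I (a * x)) ->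
  incl_set S I -> incl_set (ideal_gen S) I.
Proof.
move=> I0 ID IM SI _ [s [sS ->]]; rewrite big_seq.
by apply: big_ind => // c /sS /SI; apply: IM.
Qed.

Lemma ideal_gen_mono S S' : incl_set S S' -> incl_set (ideal_gen S) (ideal_gen S').
Proof. by move=> SS' p [s [sS ->]]; exists s; split=> // c /sS /SS'. Qed.

Lemma mrad_mono I I' : incl_set I I' -> incl_set (mrad I) (mrad I').
Proof. by move=> II' p [k /II' Ipk]; exists k. Qed.

Lemma ideal_gen2 (a b c e : {mpoly K[n]}) :
  ideal_gen (fun q => q = a \/ q = b) (c * a + e * b).
Proof.
exists [:: (c, a); (e, b)]; split; last by rewrite !big_cons big_nil addr0.
by move=> x; rewrite !inE => /orP[] /eqP ->; [left | right].
Qed.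

End IdealGen.

Definition Pmat : 'M[nat]_(2, 3) := mat_of_lists 2 3 [:: [:: 1; 1; 0]; [:: 1; 0; 1]]%N.

Lemma Mmat_factor : Mmat = Pmat *m Nmat.
Proof.
apply/matrixP => i j; rewrite !mxE !big_ord_recl big_ord0 !mxE /=.
by case: i => [[|[|[]]] ?]; case: j => [[|[|[|[|[|[|[]]]]]]] ?].
Qed.

Local Notation t0 := (ord0 : 'I_3).
Local Notation t1 := (lift ord0 ord0 : 'I_3).
Local Notation t2 := (lift ord0 (lift ord0 ord0) : 'I_3).
Local Notation s1 := (lift ord0 ord0 : 'I_2).

(* Every column of N has degree 3 and a nonzero entry in row 1 or 2. *)
Lemma mnm_mx_N (u : 'X_{1..6}) : let b := mnm_mx Nmat u in
  (3 %| b t0 + b t1 + b t2)%N /\ ((b t0 == 0) || (0 < b t1 + b t2))%N.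
Proof. rewrite /mnm_mx !mnmE !big_ord_recl !big_ord0 !mxE /=; split; lia. Qed.

Section ToricExample.
Variable K : fieldType.
Local Notation T0 := ('X_t0 : {mpoly K[3]}).
Local Notation T1 := ('X_t1 : {mpoly K[3]}).
Local Notation T2 := ('X_t2 : {mpoly K[3]}).
Local Notation phiN := (@monomial_map K 3 6 Nmat).
Local Notation I_N := (@toric_ideal K 3 6 Nmat).
Local Notation I_M := (@toric_ideal K 2 6 Mmat).

Definition hcub : {mpoly K[3]} := (T1 * T2) ^+ 3 - T0 ^+ 3.

Definition hcub_ideal (q : {mpoly K[3]}) : Prop :=
  exists a b, q = hcub * (T1 * a + T2 * b).

Lemma hcub_ideal0 : hcub_ideal 0.
Proof. by exists 0, 0; ring. Qed.

Lemma hcub_idealD q r : hcub_ideal q -> hcub_ideal r -> hcub_ideal (q + r).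
Proof. by move=> [a [b ->]] [a' [b' ->]]; exists (a + a'), (b + b'); ring. Qed.

Lemma hcub_idealMl c q : hcub_ideal q -> hcub_ideal (c * q).
Proof. by move=> [a [b ->]]; exists (c * a), (c * b); ring. Qed.

(* For m = (a, b, c) with 3 | a + b + c, the P-degree is v = (a + b, a + c) and
   r = a mod 3; normal_mono v equals T0^r (T1 T2)^(a - r) T1^b T2^c. *)
Definition normal_mono (v : 'X_{1..2}) : {mpoly K[3]} :=
  let r := ((v ord0 + v s1) %% 3)%N in
  T0 ^+ r * T1 ^+ (v ord0 - r) * T2 ^+ (v s1 - r).

Lemma X_sub_normal_mono (m : 'X_{1..3}) : (3 %| m t0 + m t1 + m t2)%N ->
  'X_[m] - normal_mono (mnm_mx Pmat m) =
  T0 ^+ (m t0 %% 3) * T1 ^+ m t1 * T2 ^+ m t2 *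
    ((T0 ^+ 3) ^+ (m t0 %/ 3) - ((T1 * T2) ^+ 3) ^+ (m t0 %/ 3)).
Proof.
move=> deg3; rewrite /normal_mono !mnmE !big_ord_recl !big_ord0 !mxE /=.
rewrite mpolyXE_id !big_ord_recl big_ord0 mulr1 mulrA.
move: (m t0) (m t1) (m t2) deg3 => a b c deg3.
rewrite !mul1n !mul0n !add0n !addn0.
have -> : ((a + b + (a + c)) %% 3 = a %% 3)%N by lia.
have -> : (a + b - a %% 3 = b + a %/ 3 * 3)%N by lia.
have -> : (a + c - a %% 3 = c + a %/ 3 * 3)%N by lia.
rewrite {1}(divn_eq a 3) !exprD !(mulnC (a %/ 3)%N) !exprM !exprMn.
ring.
Qed.

Lemma hcub_ideal_X_sub_normal (m : 'X_{1..3}) :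
  (3 %| m t0 + m t1 + m t2)%N -> ((m t0 == 0) || (0 < m t1 + m t2))%N ->
  hcub_ideal ('X_[m] - normal_mono (mnm_mx Pmat m)).
Proof.
move=> deg3 cond; rewrite X_sub_normal_mono //.
set r := (m t0 %% 3)%N; set j := (m t0 %/ 3)%N.
have [S ES] : exists S, (T0 ^+ 3) ^+ j - ((T1 * T2) ^+ 3) ^+ j = - hcub * S.
  by eexists; rewrite -opprB subrXX mulNr.
rewrite ES; case: (posnP (m t1)) => [b0 | b_gt0].
  case: (posnP (m t2)) => [c0 | c_gt0].
    have j0 : j = 0%N by rewrite /j; move: cond; rewrite b0 c0 /= orbF => /eqP ->.
    by exists 0, 0; move: ES; rewrite j0 !expr0 subrr => <-; ring.
  exists 0, (- (T0 ^+ r * T1 ^+ m t1 * T2 ^+ (m t2).-1 * S)).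
  by rewrite -{1}(prednK c_gt0) exprS; ring.
exists (- (T0 ^+ r * T1 ^+ (m t1).-1 * T2 ^+ m t2 * S)), 0.
by rewrite -{1}(prednK b_gt0) exprS; ring.
Qed.

Lemma monomial_map_N_toric_M p : I_M p -> hcub_ideal (phiN p).
Proof.
move=> IMp.
have -> : phiN p = \sum_(u <- msupp p)
    p@_u *: ('X_[mnm_mx Nmat u] - normal_mono (mnm_mx Pmat (mnm_mx Nmat u))).
  under eq_bigr do rewrite scalerBr; rewrite sumrB -monomial_mapE.
  under [X in _ - X]eq_bigr do rewrite -mnm_mxM -Mmat_factor.
  by rewrite toric_ideal_mlin // subr0.
apply: big_ind => [|q r|u _]; [exact: hcub_ideal0 | exact: hcub_idealD |].
rewrite -mul_mpolyC; apply: hcub_idealMl.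
by have [deg3 cond] := mnm_mx_N u; apply: hcub_ideal_X_sub_normal.
Qed.

Lemma monomial_map_xv d (A : 'M[nat]_(d, 6)) k :
  monomial_map A (xv K k.+1) = \prod_(j < d) 'X_j ^+ A j (inord k).
Proof.
rewrite /monomial_map /xv /= comp_mpolyXU -tnth_nth tnth_mktuple.
by rewrite /col_monomial mpolyXE_id; apply: eq_bigr => j _; rewrite mnmE.
Qed.

Ltac expand_monomial_map :=
  rewrite ?rmorphB ?rmorphM ?rmorphXn /= !monomial_map_xv;
  rewrite !big_ord_recl !big_ord0 !mxE /= !inordK //.

Lemma monomial_map_N_f1 : phiN (f1 K) = T1 ^+ 3 * hcub.
Proof. by rewrite /f1; expand_monomial_map; rewrite /hcub; ring. Qed.

Lemma monomial_map_N_f2 : phiN (f2 K) = T2 ^+ 3 * hcub.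
Proof. by rewrite /f2; expand_monomial_map; rewrite /hcub; ring. Qed.

Lemma toric_M_f1 : I_M (f1 K).
Proof. by rewrite /toric_ideal /f1; expand_monomial_map; ring. Qed.

Lemma toric_M_f2 : I_M (f2 K).
Proof. by rewrite /toric_ideal /f2; expand_monomial_map; ring. Qed.

Lemma toric_M_g6 : I_M (g6 K).
Proof. by rewrite /toric_ideal /g6; expand_monomial_map; ring. Qed.

Lemma hcub_ideal_exp5 q : hcub_ideal q ->
  ideal_gen (fun r => r = phiN (f1 K) \/ r = phiN (f2 K)) (q ^+ 5).
Proof.
move=> [a [b ->]]; rewrite monomial_map_N_f1 monomial_map_N_f2.
set x := T1 * a; set y := T2 * b.
have -> : (hcub * (x + y)) ^+ 5 =
    hcub ^+ 4 * a ^+ 3 * (x ^+ 2 + 5%:R * x * y + 10%:R * y ^+ 2) * (T1 ^+ 3 * hcub) +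
    hcub ^+ 4 * b ^+ 3 * (10%:R * x ^+ 2 + 5%:R * x * y + y ^+ 2) * (T2 ^+ 3 * hcub).
  by rewrite /x /y; ring.
exact: ideal_gen2.
Qed.

Lemma mrad_image_toric_M :
  set_eq (mrad (ideal_gen (image_set phiN I_M)))
         (mrad (ideal_gen (fun q => q = phiN (f1 K) \/ q = phiN (f2 K)))).
Proof.
move=> q; split.
  move=> [k /(ideal_gen_min hcub_ideal0 hcub_idealD hcub_idealMl) hk].
  exists (k * 5)%N; rewrite exprM; apply/hcub_ideal_exp5/hk.
  by move=> _ [p [IMp ->]]; apply: monomial_map_N_toric_M.
apply: mrad_mono; apply: ideal_gen_mono => _ [|] ->.
  by exists (f1 K); split=> //; apply: toric_M_f1.
by exists (f2 K); split=> //; apply: toric_M_f2.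
Qed.

Definition e6 (R : nzRingType) : 'I_6 -> R := fun i => (val i == 5%N)%:R.

(* A monomial is nonzero at e6 iff it is a power of x6, i.e. iff its N-degree
   (b0, b1, b2) satisfies b1 = 0 and b0 = 2 b2. *)
Lemma meval_e6_toric_N p : I_N p -> p.@[e6 K] = 0.
Proof.
apply: (@meval_toric_ideal K 3 6 Nmat _
  (fun b => ((b t1 == 0) && (b t0 == 2 * b t2))%N%:R)) => u.
rewrite /mnm_mx !mnmE !big_ord_recl !big_ord0 !mxE /e6 /=.
rewrite !expr0n expr1n !mulr1 -!natrM; congr _%:R.
move: (u _) (u _) (u _) (u _) (u _) (u _) => a b c d e f; lia.
Qed.

Lemma meval_e6_xv k : (k < 6)%N -> (xv K k.+1).@[e6 K] = (k == 5%N)%:R.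
Proof. by move=> lt_k6; rewrite /xv mevalXU /e6 /= inordK. Qed.

Lemma meval_e6_J p :
  ideal_gen (fun q => I_N q \/ q = f1 K \/ q = f2 K) p -> p.@[e6 K] = 0.
Proof.
apply: (ideal_gen_min (I := fun q => q.@[e6 K] = 0)) => [|x y|a x|q] /=.
- exact: meval0.
- by rewrite mevalD => -> ->; rewrite addr0.
- by rewrite mevalM => ->; rewrite mulr0.
by case=> [/meval_e6_toric_N //|[] ->]; rewrite mevalB !mevalM !meval_e6_xv //=; ring.
Qed.

Lemma meval_e6_g6 : (g6 K).@[e6 K] = 1.
Proof. by rewrite /g6 mevalB !mevalM !meval_e6_xv //=; ring. Qed.

Lemma g6_exp_notin_J k :
  ~ ideal_gen (fun q => I_N q \/ q = f1 K \/ q = f2 K) (g6 K ^+ k).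
Proof.
by move/meval_e6_J; rewrite rmorphXn /= meval_e6_g6 expr1n => /eqP; rewrite oner_eq0.
Qed.

Lemma e6_zero_set_N (L : fieldType) (iota : {rmorphism K -> L}) :
  zero_set iota I_N (e6 L).
Proof.
move=> p /meval_e6_toric_N e6p.
rewrite (@meval_eq _ _ _ (fun i => iota (e6 K i))) => [|i].
  by rewrite meval_map_mpoly e6p rmorph0.
by rewrite rmorph_nat.
Qed.

End ToricExample.

Lemma e6_notin_Gamma_N (L : fieldType) : ~ @Gamma L 3 6 Nmat (e6 L).
Proof.
move=> [T NT]; have := NT (inord 4); have := NT (inord 5).
rewrite /e6 !big_ord_recl !big_ord0 !mxE /= !inordK //=.
rewrite !expr0 !expr1 !mul1r !mulr1 => x6 /esym/eqP.
rewrite mulf_eq0 expf_eq0 /= => /orP[] /eqP T0;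
  by move: x6; rewrite T0 ?expr0n ?mul0r ?mulr0 => /eqP; rewrite oner_eq0.
Qed.

Theorem mainTheorem4 (K : fieldType) :
  let I_N := @toric_ideal K 3 6 Nmat in
  let I_M := @toric_ideal K 2 6 Mmat in
  let phi := @monomial_map K 3 6 Nmat in
  let J := ideal_gen (fun p => I_N p \/ p = f1 K \/ p = f2 K) in
  [/\ incl_set I_N I_M,
      set_eq (mrad (ideal_gen (image_set phi I_M)))
             (mrad (ideal_gen (fun q => q = phi (f1 K) \/ q = phi (f2 K)))),
      ~ set_eq I_M (mrad J),
      I_M (g6 K) /\ (forall k : nat, ~ J (g6 K ^+ k)) &
      forall (L : closedFieldType) (iota : {rmorphism K -> L}),
        ~ set_eq (@Gamma L 3 6 Nmat) (zero_set iota I_N)].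
Proof.
move=> I_N I_M phi J; split.
- by rewrite /I_M Mmat_factor; apply: toric_ideal_mulmx.
- exact: mrad_image_toric_M.
- by move=> /(_ (g6 K)) [/(_ (toric_M_g6 K)) [k /g6_exp_notin_J]].
- by split; [apply: toric_M_g6 | apply: g6_exp_notin_J].
- move=> L iota /(_ (e6 L)) [_ /(_ (e6_zero_set_N iota))].
  exact: e6_notin_Gamma_N.
Qed.
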